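(* Let $(X_i)_{i\in\mathbb{T}}$ ($\mathbb{T}$ one of $\mathbb{Z},\mathbb{N},\mathbb{N}\setminus\{0\}$) be a stationary sequence of $\mathbb{R}^d$-valued random variables such that the distribution of $X_1$ is supported on a compact set $\mathbb{M}\subset\mathbb{R}^d$. Let $n\ge1$, $\epsilon>0$, and let $k,r$ be positive integers with $kr\le n$. For $1\le i\le k$ let $Y_{i,r}=(X_{(i-1)r+1},\ldots,X_{ir})^t\in\mathbb{R}^{dr}$, let $\mathbb{Y}_k=\{Y_{1,r},\ldots,Y_{k,r}\}$, and let $\mathbb{M}_{dr}\subset\mathbb{R}^{dr}$ be the support of $Y_{1,r}$. Then, with $\mathbb{X}_n=\{X_1,\ldots,X_n\}$, $$\mathbb{P}\big(d_H(\mathbb{X}_n,\mathbb{M})>\epsilon\big)\le \mathbb{P}\big(d_H(\mathbb{Y}_k,\mathbb{M}_{dr})>\epsilon\big)\le \frac{\sup_{x\in\mathbb{M}_{dr}}\mathbb{P}\big(\min_{1\le i\le k}\|Y_{i,r}-x\|>\epsilon/2\big)}{1-\sup_{x\in\mathbb{M}_{dr}}\mathbb{P}\big(\|Y_{1,r}-x\|>\epsilon/4\big)}.$$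
   Context: The support of a random vector is the smallest closed set carrying its full mass. Norms are Euclidean. $d_H$ is the Hausdorff distance between closed sets: $d_H(A,B)=\max\big(\sup_{x\in A}\inf_{y\in B}\|x-y\|,\ \sup_{x\in B}\inf_{y\in A}\|x-y\|\big)$; finite sets of random points are viewed as subsets of the ambient Euclidean space. *)

From HB Require Import structures.
From mathcomp Require Import all_boot all_order all_algebra.
From mathcomp Require Import all_classical all_reals all_analysis.
Set Implicit Arguments. Unset Strict Implicit. Unset Printing Implicit Defensive.
Import Order.TTheory GRing.Theory Num.Theory.
Import numFieldNormedType.Exports.
Local Open Scope classical_set_scope.
Local Open Scope ring_scope.

Definition enorm {R : realType} {n : nat} (v : 'rV[R]_n) : R :=
  Num.sqrt (\sum_(j < n) v ord0 j ^+ 2).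

Definition borel {U : topologicalType} (B : set U) : Prop := <<s open >> B.

Definition random_vector {d0 : measure_display} {T : measurableType d0}
  {R : realType} {n : nat} (Z : T -> 'rV[R]_n) : Prop :=
  forall B : set 'rV[R]_n, borel B -> measurable (Z @^-1` B).

Definition same_law {d0 : measure_display} {T : measurableType d0}
  {R : realType} (P : probability T R) {m n : nat}
  (Z1 Z2 : T -> 'M[R]_(m, n)) : Prop :=
  forall B : set 'M[R]_(m, n), borel B -> P (Z1 @^-1` B) = P (Z2 @^-1` B).

Definition stationary {d0 : measure_display} {T : measurableType d0}
  {R : realType} (P : probability T R) {d : nat} (X : nat -> T -> 'rV[R]_d)
  : Prop :=
  forall (m : nat) (ts : 'I_m -> nat) (s : nat),
    same_law P (fun w => \matrix_(j < m, l < d) X (ts j + s)%N w ord0 l)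
               (fun w => \matrix_(j < m, l < d) X (ts j) w ord0 l).

Definition is_support {d0 : measure_display} {T : measurableType d0}
  {R : realType} (P : probability T R) {n : nat} (Z : T -> 'rV[R]_n)
  (S : set 'rV[R]_n) : Prop :=
  [/\ closed S, P (Z @^-1` S) = 1%E &
      forall C : set 'rV[R]_n, closed C -> P (Z @^-1` C) = 1%E -> S `<=` C].

Definition eucl_dist {R : realType} {n : nat} (x y : 'rV[R]_n) : R := enorm (x - y).

Definition hausdorff {R : realType} {n : nat} (A B : set 'rV[R]_n) : \bar R :=
  maxe (ereal_sup [set ereal_inf [set (eucl_dist x y)%:E | y in B] | x in A])
       (ereal_sup [set ereal_inf [set (eucl_dist x y)%:E | y in A] | x in B]).

(* block vector Y_{i,r} = (X_{ir}, ..., X_{ir+r-1}) in R^{rd}, 0-based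
   (paper's Y_{i+1,r} = (X_{ir+1},...,X_{(i+1)r}) with X_{t} := X (t-1)) *)
Definition block {T : Type} {R : realType} {d : nat} (X : nat -> T -> 'rV[R]_d)
  (r i : nat) (w : T) : 'rV[R]_(r * d) :=
  mxvec (\matrix_(j < r, l < d) X (i * r + j)%N w ord0 l).

From HB Require Import structures.
From mathcomp Require Import all_boot all_order all_algebra.
From mathcomp Require Import all_classical all_reals all_analysis.
From mathcomp Require Import ring lra.
Set Implicit Arguments. Unset Strict Implicit. Unset Printing Implicit Defensive.
Import Order.TTheory GRing.Theory Num.Theory.
Import numFieldNormedType.Exports.
Local Open Scope classical_set_scope.
Local Open Scope ring_scope.

(* Almost surely every X_t lies in M and every block Y_i lies in M_dr, so both Hausdorff
   events reduce to the event that some point of the support is at distance > eps from all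
   the sample points.

   First inequality: such a point x of M is approximated by the first d coordinates of a
   point y of M_dr (M lies in the closure of their image, by minimality of the support), and
   dropping coordinates does not increase distances, so y is far from every Y_i.

   Second inequality: write s and q for the two suprema in the bound and fix an eps/8-net
   (x_j) of the compact set M_dr. Let A_j be the event that x_j is the first net point at
   distance > 7eps/8 from every Y_i, let C_l be the event that x_l is the first net point
   within eps/8 of Y_1, and call j and l close when |x_j - x_l| < 3eps/8. The A_j with j
   close to a fixed l all force every Y_i to be eps/2-far from x_l, so their total mass is
   at most s; for fixed j, the C_l with l close to j cover the event |Y_1 - x_j| <= eps/4
   up to the null event Y_1 \notin M_dr, so their total mass is at least 1 - q. Counting the
   pairs (j, l) in both orders gives (1 - q) sum_j P(A_j) <= s, and the far event is
   contained in the union of the A_j. *)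

(** * Euclidean distance *)

Lemma ler_entry_mx_norm (R : realType) m n (A : 'M[R]_(m, n)) i j :
  `|A i j| <= `|A|.
Proof.
rewrite [leRHS]/Num.norm /= mx_normrE.
by apply/bigmax_geP; right; exists (i, j).
Qed.

Lemma mx_norm_le_entries (R : realType) m n (A : 'M[R]_(m, n)) e :
  0 <= e -> (forall i j, `|A i j| <= e) -> `|A| <= e.
Proof.
move=> e0 Ae; rewrite [leLHS]/Num.norm /= mx_normrE.
by apply/bigmax_leP; split=> // -[i j] _; exact: Ae.
Qed.

Section euclidean_norm.
Variables (R : realType) (m : nat).
Implicit Types (u v x y z : 'rV[R]_m).

Lemma sum_sqr_ge0 v : 0 <= \sum_(j < m) v ord0 j ^+ 2.
Proof. by apply: sumr_ge0 => j _; exact: sqr_ge0. Qed.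

Lemma enorm_ge0 v : 0 <= enorm v.
Proof. exact: sqrtr_ge0. Qed.

Lemma enorm_sqr v : enorm v ^+ 2 = \sum_(j < m) v ord0 j ^+ 2.
Proof. by rewrite sqr_sqrtr // sum_sqr_ge0. Qed.

Lemma ler_coord_enorm v j : `|v ord0 j| <= enorm v.
Proof.
rewrite -sqrtr_sqr ler_sqrt ?sum_sqr_ge0 // (bigD1 j) //= lerDl.
by apply: sumr_ge0 => i _; exact: sqr_ge0.
Qed.

Lemma mx_norm_le_enorm v : `|v| <= enorm v.
Proof.
rewrite [leLHS]/Num.norm /= mx_normrE; apply/bigmax_leP; split => [|[i j] _].
  exact: enorm_ge0.
by rewrite (ord1 i); exact: ler_coord_enorm.
Qed.

Lemma enorm_le_mx_norm v : enorm v <= m%:R * `|v|.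
Proof.
rewrite -(ler_pXn2r (_ : (0 < 2)%N)) ?nnegrE ?enorm_ge0 ?mulr_ge0 //.
rewrite enorm_sqr exprMn; apply: (@le_trans _ _ (\sum_(j < m) `|v| ^+ 2)).
  apply: ler_sum => j _; rewrite -real_normK ?num_real // lerXn2r ?nnegrE //.
  exact: ler_entry_mx_norm.
rewrite sumr_const card_ord -[_ *+ m]mulr_natl ler_wpM2r ?sqr_ge0 // -natrX ler_nat.
by case: (m) => // n; rewrite expnS leq_pmulr ?expn_gt0.
Qed.

Lemma enormN v : enorm (- v) = enorm v.
Proof. by congr Num.sqrt; apply: eq_bigr => j _; rewrite mxE sqrrN. Qed.

Lemma enorm_eq0 v : enorm v = 0 -> v = 0.
Proof.
move=> v0; apply/rowP => j; rewrite mxE; apply/normr0_eq0/eqP.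
by rewrite eq_le normr_ge0 andbT -v0 ler_coord_enorm.
Qed.

Lemma cauchy_schwarz_enorm u v :
  \sum_(j < m) u ord0 j * v ord0 j <= enorm u * enorm v.
Proof.
have [/eqP|ab0] := eqVneq (enorm u * enorm v) 0.
  rewrite mulf_eq0 => /orP[] /eqP/enorm_eq0 ->;
  by rewrite big1 ?mulr_ge0 ?enorm_ge0 // => j _; rewrite mxE ?mul0r ?mulr0.
set a := enorm u in ab0 *; set b := enorm v in ab0 *; set c := \sum_(j < m) _.
have expand : \sum_(j < m) (b * u ord0 j - a * v ord0 j) ^+ 2 =
    b ^+ 2 * \sum_(j < m) u ord0 j ^+ 2 + a ^+ 2 * \sum_(j < m) v ord0 j ^+ 2
    - 2 * (a * b) * c.
  rewrite /c !mulr_sumr -big_split -sumrB /=.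
  by apply: eq_bigr => j _; ring.
rewrite -!enorm_sqr -/a -/b in expand.
have : 0 <= (2 * (a * b)) * (a * b - c).
  rewrite (_ : _ * (_ - c) = b ^+ 2 * a ^+ 2 + a ^+ 2 * b ^+ 2 - 2 * (a * b) * c).
    by rewrite -expand; apply: sumr_ge0 => j _; exact: sqr_ge0.
  by ring.
have ab_gt0 : 0 < a * b by rewrite lt0r ab0 mulr_ge0 ?enorm_ge0.
by rewrite pmulr_rge0 ?subr_ge0 // mulr_gt0.
Qed.

Lemma ler_enormD u v : enorm (u + v) <= enorm u + enorm v.
Proof.
rewrite -(ler_pXn2r (_ : (0 < 2)%N)) ?nnegrE ?addr_ge0 ?enorm_ge0 //.
rewrite sqrrD !enorm_sqr.
have -> : \sum_(j < m) (u + v) ord0 j ^+ 2 = \sum_(j < m) u ord0 j ^+ 2 +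
    (\sum_(j < m) u ord0 j * v ord0 j) *+ 2 + \sum_(j < m) v ord0 j ^+ 2.
  rewrite -sumrMnl -!big_split /=; apply: eq_bigr => j _; rewrite mxE; ring.
by rewrite lerD2r lerD2l lerMn2r /= cauchy_schwarz_enorm.
Qed.

Lemma eucl_distC x y : eucl_dist x y = eucl_dist y x.
Proof. by rewrite /eucl_dist -enormN opprB. Qed.

Lemma eucl_distxx x : eucl_dist x x = 0.
Proof.
rewrite /eucl_dist /enorm subrr big1 ?sqrtr0 // => j _.
by rewrite mxE expr0n.
Qed.

Lemma eucl_dist_triangle x y z :
  eucl_dist x z <= eucl_dist x y + eucl_dist y z.
Proof. by rewrite /eucl_dist -[x - z](subrKA y) ler_enormD. Qed.

Lemma nbhs_eucl_ball x e : 0 < e -> nbhs x [set y | eucl_dist x y < e].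
Proof.
move=> e0; apply/nbhs_ballP; exists (e / m.+1%:R) => [|y]; first by rewrite /= divr_gt0.
rewrite -ball_normE /= ltr_pdivlMr // => xy.
apply: le_lt_trans (enorm_le_mx_norm _) (le_lt_trans _ xy).
by rewrite mulrC ler_wpM2l ?ler_nat.
Qed.

Lemma nbhs_eucl_ball_subset x (U : set 'rV[R]_m) :
  nbhs x U -> exists2 e, 0 < e & [set y | eucl_dist x y < e] `<=` U.
Proof.
move=> /nbhs_ballP[e e0 xeU]; exists e => // y xy; apply: xeU.
by rewrite -ball_normE /=; exact: le_lt_trans (mx_norm_le_enorm _) xy.
Qed.

Lemma compact_eucl_net (S : set 'rV[R]_m) e : compact S -> 0 < e ->
  exists2 net : seq 'rV[R]_m, {in net, forall x, S x} &
    forall y, S y -> exists2 x, x \in net & eucl_dist x y < e.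
Proof.
rewrite compact_cover => cS e0.
have [|D DS SD] := cS _ S (fun x => interior [set y | eucl_dist x y < e])
    (fun x _ => @open_interior _ _).
  by move=> x Sx; exists x => //; rewrite /interior /=; exact: nbhs_eucl_ball.
by exists (finmap.enum_fset D) => [x /DS|y /SD[x xD /interior_subset]]; [rewrite inE | exists x].
Qed.

Lemma closure_eucl_approx (S : set 'rV[R]_m) x e : closure S x -> 0 < e ->
  exists2 y, S y & eucl_dist x y < e.
Proof.
by move=> Sx e0; have [y [Sy xy]] := Sx _ (nbhs_eucl_ball x e0); exists y.
Qed.

End euclidean_norm.

(** * Distance to a set and Hausdorff distance *)

Lemma finite_gap (R : realType) (I : finType) (g : I -> R) c :
  (forall i, c < g i) -> exists2 e, 0 < e & forall i, c + e < g i.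
Proof.
move=> cg; case: (pickP [pred i : I | true]) => [i0 _|I0]; last first.
  by exists 1 => // i; have := I0 i.
case: (@arg_minP _ R _ i0 xpredT g isT) => j _ jmin.
exists ((g j - c) / 2) => [|i]; first by rewrite divr_gt0 // subr_gt0.
by have := jmin i isT; have := cg j; lra.
Qed.

Section set_distance.
Variables (R : realType) (m : nat).
Implicit Types (x y : 'rV[R]_m) (S : set 'rV[R]_m).

Definition set_dist x S : \bar R := ereal_inf [set (eucl_dist x y)%:E | y in S].

Definition has_far_point S (c : R) k (v : 'I_k -> 'rV[R]_m) :=
  exists2 x, S x & forall i, c < eucl_dist x (v i).

Lemma set_dist_le0 x S : S x -> (set_dist x S <= 0)%E.
Proof. by move=> Sx; apply: ereal_inf_lbound; exists x; rewrite ?eucl_distxx. Qed.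

Lemma closed_set_dist_gt0 x S : closed S -> ~ S x -> (0 < set_dist x S)%E.
Proof.
move=> /closed_openC Sc Sx.
have [e e0 eS] : exists2 e, 0 < e & [set y | eucl_dist x y < e] `<=` ~` S.
  by apply: nbhs_eucl_ball_subset; apply: open_nbhs_nbhs.
apply: (@lt_le_trans _ _ e%:E); first by rewrite lte_fin.
apply/ereal_infP => _ [y Sy <-]; rewrite lee_fin leNgt; apply/negP => xy.
exact: eS xy Sy.
Qed.

Lemma set_dist_gtP x S (c : R) :
  (c%:E < set_dist x S)%E <->
  exists2 e, 0 < e & forall y, S y -> c + e <= eucl_dist x y.
Proof.
split=> [|[e e0 ceS]]; last first.
  apply: (@lt_le_trans _ _ (c + e)%:E); first by rewrite lte_fin ltrDl.
  by apply/ereal_infP => _ [y Sy <-]; rewrite lee_fin ceS.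
have dist_ge y : S y -> (set_dist x S <= (eucl_dist x y)%:E)%E.
  by move=> Sy; apply: ereal_inf_lbound; exists y.
case: (set_dist x S) dist_ge => [r||//] dist_ge cr.
  exists ((r - c) / 2) => [|y /dist_ge]; first by rewrite divr_gt0 // subr_gt0 -lte_fin.
  by rewrite lee_fin; move: cr; rewrite lte_fin; lra.
by exists 1 => // y /dist_ge; rewrite leye_eq.
Qed.

Lemma set_dist_range_gtP x (c : R) k (v : 'I_k -> 'rV[R]_m) :
  (c%:E < set_dist x (range v))%E <-> forall i, c < eucl_dist x (v i).
Proof.
rewrite set_dist_gtP; split=> [[e e0 cev] i|/finite_gap[e e0 cev]].
  by apply: lt_le_trans (cev _ _); [rewrite ltrDl|exists i].
by exists e => // _ [i _ <-]; exact/ltW.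
Qed.

Lemma hausdorff_gtP (c : R) k (v : 'I_k -> 'rV[R]_m) S :
  (c%:E < hausdorff (range v) S)%E <->
  (exists i, c%:E < set_dist (v i) S)%E \/ has_far_point S c v.
Proof.
rewrite /hausdorff lt_max; split.
  case/orP=> /ereal_sup_gt[_ [y Sy <-]]; first by case: Sy => i _ <- ci; left; exists i.
  by move/set_dist_range_gtP => cy; right; exists y.
case=> [[i ci]|[x Sx /set_dist_range_gtP cx]]; apply/orP; [left|right].
  by apply: lt_le_trans ci (ereal_sup_ubound _); exists (v i) => //; exists i.
by apply: lt_le_trans cx (ereal_sup_ubound _); exists x.
Qed.

Lemma hausdorff_gt_in (c : R) k (v : 'I_k -> 'rV[R]_m) S : 0 <= c ->
  (forall i, S (v i)) ->
  (c%:E < hausdorff (range v) S)%E <-> has_far_point S c v.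
Proof.
move=> c0 Sv; rewrite hausdorff_gtP; split=> [[[i ci]|//]|]; last by right.
by have := lt_le_trans ci (set_dist_le0 (Sv i)); rewrite lte_fin ltNge c0.
Qed.

End set_distance.

(** * Measurability of distance events *)

Lemma rat_approx_rV (R : realType) m (x : 'rV[R]_m) e : 0 < e ->
  exists q : 'rV[rat]_m, eucl_dist x (map_mx ratr q) < e.
Proof.
move=> /(nbhs_eucl_ball x)/nbhs_ballP[d d0 xd].
have /choice[q xq] : forall j, exists q : rat, `|x ord0 j - ratr q| < d.
  move=> j; have [q] : exists q : rat, ratr q \in `]x ord0 j - d, x ord0 j + d[.
    by apply: rat_in_itvoo; rewrite ltrBlDr -addrA ltrDl addr_gt0.
  by rewrite in_itv /= => xq; exists q; rewrite ltr_distlC.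
exists (\row_j q j); apply: xd; rewrite -ball_normE /= [X in X < _]/Num.norm /=.
rewrite mx_normrE; apply/bigmax_ltP; split=> // -[i j] _.
by rewrite (ord1 i) !mxE; exact: xq.
Qed.

Lemma exists_pos_ratr_lt (R : realType) (e : R) : 0 < e ->
  exists2 q : rat, 0 < ratr q :> R & ratr q < e.
Proof.
by move=> e0; have [q] := rat_in_itvoo e0; rewrite in_itv /= => /andP[]; exists q.
Qed.

Lemma borel_closed (U : ptopologicalType) (A : set U) : closed A -> borel A.
Proof.
move=> cA; rewrite -[A]setCK; apply: (@measurableC _ (g_sigma_algebraType (@open U))).
by apply: sub_sigma_algebra; exact: closed_openC.
Qed.

Section measurability.
Context d0 (T : measurableType d0) (R : realType).

Lemma measurable_exists (I : countType) (D : I -> Prop) (F : I -> set T) :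
  (forall i, D i -> measurable (F i)) -> measurable [set w | exists2 i, D i & F i w].
Proof.
move=> mF; have -> : [set w | exists2 i, D i & F i w] = \bigcup_(i in D) F i by [].
rewrite bigcup_mkcond; apply: countable_bigcupT_measurable => [|i].
  exact: countableP.
by case: ifPn => [/set_mem/mF|]; [|move=> _; exact: measurable0].
Qed.

Lemma measurable_forall (I : countType) (D : I -> Prop) (F : I -> set T) :
  (forall i, D i -> measurable (F i)) -> measurable [set w | forall i, D i -> F i w].
Proof.
move=> mF; have -> : [set w | forall i, D i -> F i w] =
    ~` [set w | exists2 i, D i & (~` F i) w].
  apply/seteqP; split=> [w DF [i /DF]//|w DF i Di]; apply: contrapT => Fi.
  by apply: DF; exists i.
by apply/measurableC/measurable_exists => i /mF/measurableC.
Qed.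

Lemma measurable_forallT (I : countType) (F : I -> set T) :
  (forall i, measurable (F i)) -> measurable [set w | forall i, F i w].
Proof.
move=> mF; have -> : [set w | forall i, F i w] = [set w | forall i, True -> F i w].
  by apply/seteqP; split=> w wF i //; exact: wF.
exact: measurable_forall.
Qed.

Lemma measurable_ltr (f g : T -> R) :
  measurable_fun setT f -> measurable_fun setT g -> measurable [set w | f w < g w].
Proof.
move=> mf mg; rewrite -[X in measurable X]setTI.
exact: (measurable_realfun.measurable_fun_ltr mf mg measurableT).
Qed.

Definition measurable_coords m (f : T -> 'rV[R]_m) :=
  forall j, measurable_fun setT (fun w => f w ord0 j).

Lemma measurable_coords_cst m (y : 'rV[R]_m) : measurable_coords (fun=> y).
Proof. by move=> j; exact: measurable_cst. Qed.

Lemma random_vector_coords m (f : T -> 'rV[R]_m) :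
  random_vector f -> measurable_coords f.
Proof.
move=> rf j; apply: (@measurability _ _ _ _ setT _ (@measurable_realfun.RGenOInfty.G R)).
  exact: measurable_realfun.RGenOInfty.measurableE.
move=> _ [_ [x ->] <-]; rewrite setTI.
have -> : (fun w => f w ord0 j) @^-1` `]x, +oo[ = f @^-1` [set v | x < v ord0 j].
  by apply/seteqP; split=> w; rewrite /= in_itv /= andbT.
apply: rf; apply: sub_sigma_algebra.
apply: (@open_comp _ _ (fun v : 'rV[R]_m => v ord0 j) [set y | x < y]).
  by move=> v _; exact: coord_continuous.
exact: open_gt.
Qed.

Lemma measurable_eucl_dist m (f g : T -> 'rV[R]_m) :
  measurable_coords f -> measurable_coords g ->
  measurable_fun setT (fun w => eucl_dist (f w) (g w)).
Proof.
move=> mf mg; apply: measurableT_comp.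
  by apply: measurable_realfun.continuous_measurable_fun; exact: sqrt_continuous.
apply: measurable_sum => j; under eq_fun do rewrite !mxE.
exact/measurable_realfun.measurable_funX/measurable_realfun.measurable_funB.
Qed.

Lemma measurable_eucl_dist_gt m (f g : T -> 'rV[R]_m) (c : R) :
  measurable_coords f -> measurable_coords g ->
  measurable [set w | c < eucl_dist (f w) (g w)].
Proof.
by move=> mf mg; apply: measurable_ltr; [exact: measurable_cst|exact: measurable_eucl_dist].
Qed.

Lemma measurable_eucl_dist_lt m (f g : T -> 'rV[R]_m) (c : R) :
  measurable_coords f -> measurable_coords g ->
  measurable [set w | eucl_dist (f w) (g w) < c].
Proof.
by move=> mf mg; apply: measurable_ltr; [exact: measurable_eucl_dist|exact: measurable_cst].
Qed.

Lemma measurable_has_far_point m k (F : 'I_k -> T -> 'rV[R]_m) S (c : R) :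
  (forall i, measurable_coords (F i)) ->
  measurable [set w | has_far_point S c (fun i => F i w)].
Proof.
(* The quantifier over the possibly uncountable set S becomes one over rational vectors
   close to S. *)
move=> mF; pose near_S (q : 'rV[rat]_m * rat) :=
  exists2 x, S x & eucl_dist x (map_mx ratr q.1) < ratr q.2.
have -> : [set w | has_far_point S c (fun i => F i w)] = [set w | exists2 q,
    near_S q & forall i, c + ratr q.2 < eucl_dist (map_mx ratr q.1) (F i w)].
  apply/seteqP; split=> w.
    move=> [x Sx /finite_gap[e e0 cexF]].
    have [r r0 re] := exists_pos_ratr_lt (divr_gt0 e0 (ltr0Sn R 1)).
    have [q xq] := rat_approx_rV x r0.
    exists (q, r) => [|i /=]; first by exists x.
    by have := cexF i; have := eucl_dist_triangle x (map_mx ratr q) (F i w); lra.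
  move=> [[q r] [x Sx /= xq] crqF]; exists x => // i.
  have := eucl_dist_triangle (map_mx ratr q) x (F i w); rewrite eucl_distC in xq.
  by have := crqF i; lra.
apply: measurable_exists => q _; apply: measurable_forallT => i.
exact: measurable_eucl_dist_gt (measurable_coords_cst _) (mF i).
Qed.

Lemma measurable_set_dist_gt m (f : T -> 'rV[R]_m) S (c : R) :
  measurable_coords f -> measurable [set w | (c%:E < set_dist (f w) S)%E].
Proof.
move=> mf; pose near_S (q : 'rV[rat]_m * rat) :=
  exists2 y, S y & eucl_dist y (map_mx ratr q.1) < ratr q.2.
have -> : [set w | (c%:E < set_dist (f w) S)%E] = [set w | exists2 r : rat,
    0 < ratr r :> R & forall q : 'rV[rat]_m, near_S (q, r) ->
      c + ratr r *+ 2 < eucl_dist (f w) (map_mx ratr q)].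
  apply/seteqP; split=> w.
    move=> /set_dist_gtP[e e0 cefS].
    have [r r0 re] := exists_pos_ratr_lt (divr_gt0 e0 (ltr0Sn R 2)).
    exists r => // q [y Sy /= yq]; have := cefS y Sy.
    have := eucl_dist_triangle (f w) (map_mx ratr q) y.
    by rewrite [eucl_dist (map_mx _ _) y]eucl_distC mulr2n; lra.
  move=> [r r0 crfS]; apply/set_dist_gtP; exists (ratr r) => // y Sy.
  have [q yq] := rat_approx_rV y r0.
  have := crfS q (ex_intro2 _ _ y Sy yq).
  by have := eucl_dist_triangle (f w) y (map_mx ratr q); rewrite mulr2n; lra.
apply: measurable_exists => r _; apply: measurable_forall => q _.
exact: measurable_eucl_dist_gt mf (measurable_coords_cst _).
Qed.

Lemma measurable_closed_mem m (f : T -> 'rV[R]_m) S :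
  measurable_coords f -> closed S -> measurable [set w | S (f w)].
Proof.
move=> mf cS; have -> : [set w | S (f w)] = ~` [set w | (0 < set_dist (f w) S)%E].
  apply/seteqP; split=> w /=; first by move/set_dist_le0; rewrite leNgt => /negP.
  by move=> Sf; apply: contrapT => /(closed_set_dist_gt0 cS).
exact/measurableC/measurable_set_dist_gt.
Qed.

Lemma measurable_hausdorff_gt m k (F : 'I_k -> T -> 'rV[R]_m) S (c : R) :
  (forall i, measurable_coords (F i)) ->
  measurable [set w | (c%:E < hausdorff (range (F^~ w)) S)%E].
Proof.
move=> mF; have -> : [set w | (c%:E < hausdorff (range (F^~ w)) S)%E] =
    [set w | exists2 i, True & (c%:E < set_dist (F i w) S)%E] `|`
    [set w | has_far_point S c (F^~ w)].
  apply/seteqP; split=> w; rewrite /= hausdorff_gtP;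
  by case=> [[i]|]; [left; exists i|right].
apply: measurableU; last exact: measurable_has_far_point.
by apply: measurable_exists => i _; exact: measurable_set_dist_gt.
Qed.

End measurability.

(** * Blocks, stationarity and supports *)

Lemma mx_norm_mxvec_le (R : realType) m n (A : 'M[R]_(m, n)) : `|mxvec A| <= `|A|.
Proof.
rewrite [leLHS]/Num.norm /= mx_normrE; apply/bigmax_leP; split=> // -[i p] _ /=.
by rewrite (ord1 i); case/mxvec_indexP: p => j l; rewrite mxvecE ler_entry_mx_norm.
Qed.

Lemma mxvec_continuous (R : realType) m n : continuous (@mxvec R m n).
Proof.
move=> A U /nbhs_ballP[e e0 AeU]; apply/nbhs_ballP; exists e => // B AB.
apply: AeU; move: AB; rewrite -!ball_normE /= -linearB.
exact: le_lt_trans (mx_norm_mxvec_le _).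
Qed.

Section blocks.
Variables (R : realType) (d r : nat).

Lemma row_vec_mx_block (T : Type) (X : nat -> T -> 'rV[R]_d) i w j :
  row j (vec_mx (block X r i w)) = X (i * r + j)%N w.
Proof. by apply/rowP => l; rewrite /block mxvecK !mxE. Qed.

Lemma sum_mxvec_index (F : 'I_(r * d) -> R) :
  \sum_p F p = \sum_(i < r) \sum_(l < d) F (mxvec_index i l).
Proof.
rewrite (reindex (fun p : 'I_r * 'I_d => mxvec_index p.1 p.2)) /=; last first.
  case: (@curry_mxvec_bij r d) => g gK Kg; exists g => [[a b] _|p _].
    exact: (gK (a, b)).
  by move: (Kg p); case: (g p) => a b; apply.
by rewrite -(pair_bigA _ (fun i l => F (mxvec_index i l))).
Qed.

Lemma enorm_row_vec_mx_le (v : 'rV[R]_(r * d)) j : enorm (row j (vec_mx v)) <= enorm v.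
Proof.
rewrite /enorm ler_sqrt ?sum_sqr_ge0 // sum_mxvec_index (bigD1 j) //=.
under eq_bigr do rewrite !mxE.
rewrite lerDl; apply: sumr_ge0 => i _.
by apply: sumr_ge0 => l _; exact: sqr_ge0.
Qed.


Lemma measurable_coords_block d0 (T : measurableType d0) (X : nat -> T -> 'rV[R]_d) i :
  (forall t, random_vector (X t)) -> measurable_coords (block X r i).
Proof.
move=> HX p; case/mxvec_indexP: p => j l.
by under eq_fun do rewrite /block mxvecE mxE; exact: random_vector_coords.
Qed.

End blocks.

Section almost_sure.
Context d0 (T : measurableType d0) (R : realType).

Lemma le_measure_ae (mu : {measure set T -> \bar R}) (A B : set T) :
  measurable A -> measurable B -> {ae mu, forall w, A w -> B w} -> (mu A <= mu B)%E.
Proof.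
move=> mA mB [N [mN muN0 ABN]].
rewrite -(measureU0 mB mN muN0) le_measure ?inE //; first exact: measurableU.
by move=> w Aw; case: (pselect (B w)) => Bw; [left|right; apply: ABN => /(_ Aw)].
Qed.

Variable P : probability T R.

Lemma ae_probability1 (A : set T) :
  measurable A -> P A = 1%E <-> {ae P, forall w, A w}.
Proof.
move=> mA; change (P A = 1%E <-> P.-negligible (~` A)).
rewrite negligibleP; last exact: measurableC.
split=> [PA1|PAc0].
  by apply: eq_trans (probability_setC P mA) _; rewrite PA1 subee.
have /eqP : (1 - P A = 0)%E by apply: eq_trans (esym (probability_setC P mA)) _.
by rewrite sube_eq // add0e => /eqP <-.
Qed.

End almost_sure.

Section stationary_support.
Context d0 (T : measurableType d0) (R : realType) (P : probability T R).

Lemma is_support_neq0 m (Z : T -> 'rV[R]_m) S : is_support P Z S -> S !=set0.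
Proof.
case=> _ PS _; apply/set0P/eqP => S0; move: PS.
by rewrite S0 preimage_set0 measure0 => /esym/eqP; rewrite onee_eq0.
Qed.

Variables (d : nat) (X : nat -> T -> 'rV[R]_d).
Hypotheses (HX : forall t, random_vector (X t)) (Hstat : stationary P X).

Lemma stationary_X t (C : set 'rV[R]_d) :
  closed C -> P (X t @^-1` C) = P (X 0 @^-1` C).
Proof.
move=> cC; have := Hstat (fun=> 0%N) t (borel_closed cC).
have rowX s : (fun w => \matrix_(j < 1, l < d) X (0 + s)%N w ord0 l) = X s.
  by apply/funext => w; apply/matrixP => j l; rewrite mxE (ord1 j).
by rewrite !rowX.
Qed.

Lemma stationary_block r i (C : set 'rV[R]_(r * d)) :
  closed C -> P (block X r i @^-1` C) = P (block X r 0 @^-1` C).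
Proof.
move=> cC; have cC' : closed (mxvec @^-1` C).
  by apply: preimage_closed cC => A _; exact: mxvec_continuous.
have -> : block X r i = mxvec \o (fun w => \matrix_(j < r, l < d) X (j + i * r)%N w ord0 l).
  by apply/funext => w; rewrite /block /=; congr mxvec; apply/matrixP => j l; rewrite !mxE addnC.
exact: Hstat (fun j : 'I_r => nat_of_ord j) (i * r)%N _ (borel_closed cC').
Qed.

Lemma ae_in_support_X t M : is_support P (X 0) M -> {ae P, forall w, M (X t w)}.
Proof.

case=> cM PM _; have mXM : measurable (X t @^-1` M) by apply: HX; exact: borel_closed.
by apply/(ae_probability1 P mXM); rewrite stationary_X.
Qed.

Lemma ae_in_support_block r i S :
  is_support P (block X r 0) S -> {ae P, forall w, S (block X r i w)}.
Proof.
case=> cS PS _; have mYS : measurable (block X r i @^-1` S).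
  exact: measurable_closed_mem (measurable_coords_block _ HX) cS.
by apply/(ae_probability1 P mYS); rewrite stationary_block.
Qed.

Lemma support_sub_closure_row r (j : 'I_r) M S :
  is_support P (X 0) M -> is_support P (block X r 0) S ->
  M `<=` closure [set row j (vec_mx y) | y in S].
Proof.
move=> [_ _ minM] [cS PS _]; set C := closure _.
have cC : closed C by exact: closed_closure.
have mXC t : measurable (X t @^-1` C) by apply: HX; exact: borel_closed.
apply: (minM _ cC); rewrite -(stationary_X j cC).
apply/eqP; rewrite eq_le probability_le1 //= -PS le_measure ?inE //.
  exact: measurable_closed_mem (measurable_coords_block _ HX) cS.
move=> w Sw; apply: subset_closure; exists (block X r 0 w) => //.
by rewrite row_vec_mx_block mul0n add0n.
Qed.

Lemma support_block_compact r M S : compact M ->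
  is_support P (X 0) M -> is_support P (block X r 0) S -> compact S.
Proof.
move=> cptM HM [cS PS minS].
have [B [Breal MB]] := compact_bounded cptM.
set b := `|B| + 1; have b0 : 0 <= b by rewrite addr_ge0.
have Mb x : M x -> `|x| <= b.
  by apply: MB; rewrite (le_lt_trans (real_ler_norm Breal)) // ltrDl.
set K := [set y : 'rV[R]_(r * d) | `|y| <= b].
have cK : closed K.
  have := @preimage_closed _ _ (fun y : 'rV[R]_(r * d) => `|y|) _ _ (@closed_le _ b).
  by apply=> y _; exact: norm_continuous.
have bK : bounded_set K.
  exists b; split=> [|x bx y Ky]; first exact: num_real.
  by rewrite /= (le_trans Ky) // ltW.
apply: subclosed_compact cS (bounded_closed_compact bK cK) (minS K cK _).
have mK : measurable (block X r 0 @^-1` K).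
  exact: measurable_closed_mem (measurable_coords_block _ HX) cK.
apply/(ae_probability1 P mK).
have : {ae P, forall w, forall j : 'I_r, M (X j w)}.
  by apply: filter_forall => j; exact: ae_in_support_X.
apply: filterS => w XM; apply: le_trans (mx_norm_mxvec_le _) _.
apply: mx_norm_le_entries => // j l; rewrite mxE.
exact: le_trans (ler_entry_mx_norm _ _ _) (Mb _ (XM j)).
Qed.

End stationary_support.

(** * The covering argument *)

Lemma double_counting_le (R : realDomainType) n (a c : 'I_n -> R)
    (rel : 'I_n -> 'I_n -> bool) (t s : R) :
  (forall j, 0 <= a j) -> (forall l, 0 <= c l) -> 0 <= s ->
  \sum_l c l <= 1 ->
  (forall j, t <= \sum_(l | rel j l) c l) ->
  (forall l, \sum_(j | rel j l) a j <= s) ->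
  t * \sum_j a j <= s.
Proof.
move=> a0 c0 s0 c1 tc as_.
apply: (@le_trans _ _ (\sum_j a j * \sum_(l | rel j l) c l)).
  by rewrite mulr_sumr; apply: ler_sum => j _; rewrite mulrC ler_wpM2l.
have -> : \sum_j a j * \sum_(l | rel j l) c l = \sum_l c l * \sum_(j | rel j l) a j.
  under eq_bigr do rewrite mulr_sumr big_mkcond /=.
  rewrite exchange_big /=; apply: eq_bigr => l _.
  rewrite mulr_sumr [in RHS]big_mkcond /=; apply: eq_bigr => j _.
  by case: ifP; rewrite ?mulr0 // mulrC.
apply: (@le_trans _ _ (\sum_l c l * s)); first by apply: ler_sum => l _; rewrite ler_wpM2l.
by rewrite -mulr_suml -[leRHS]mul1r ler_wpM2r.
Qed.

Section real_probability.
Context d0 (T : measurableType d0) (R : realType) (P : probability T R).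

Definition probr (A : set T) : R := fine (P A).

Lemma probrE A : measurable A -> P A = (probr A)%:E.
Proof.
move=> mA; rewrite /probr fineK // ge0_fin_numE //.
exact: le_lt_trans (probability_le1 P mA) (ltey _).
Qed.

Lemma probr_ge0 A : 0 <= probr A.
Proof. exact: fine_ge0. Qed.

Lemma probr_le1 A : measurable A -> probr A <= 1.
Proof. by move=> mA; rewrite -lee_fin -probrE // probability_le1. Qed.

Lemma le_probr_ae A B : measurable A -> measurable B ->
  {ae P, forall w, A w -> B w} -> probr A <= probr B.
Proof. by move=> mA mB AB; rewrite -lee_fin -!probrE // le_measure_ae. Qed.

Lemma probr_setC A : measurable A -> probr (~` A) = 1 - probr A.
Proof.
move=> mA; apply: EFin_inj; rewrite EFinB -!probrE //; last exact: measurableC.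
exact: probability_setC.
Qed.

Lemma probr_bigsetU n (Q : pred 'I_n) (F : 'I_n -> set T) :
  (forall j, measurable (F j)) -> trivIset setT F ->
  probr (\big[setU/set0]_(j < n | Q j) F j) = \sum_(j < n | Q j) probr (F j).
Proof.
move=> mF tF; apply: EFin_inj; rewrite -probrE; last exact: bigsetU_measurable.
by rewrite measure_bigsetU_ord // -sumEFin; apply: eq_bigr => j _; exact: probrE.
Qed.

End real_probability.

Lemma trivIset_seqDU_ord T (F : (set T)^nat) n : trivIset setT (fun j : 'I_n => seqDU F j).
Proof. by move=> i j _ _ Fij; apply: val_inj; exact: (trivIset_seqDU F) Fij. Qed.

Lemma bigsetU_condP T n (Q : pred 'I_n) (F : 'I_n -> set T) w :
  (\big[setU/set0]_(j < n | Q j) F j) w <-> exists2 j, Q j & F j w.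
Proof.
split; first by elim/big_rec: _ => [//|i U Qi IH [Fi|/IH//]]; exists i.
by move=> [j Qj Fj]; rewrite (bigD1 j) //=; left.
Qed.

Section far_point_bound.
Context d0 (T : measurableType d0) (R : realType) (P : probability T R).
Variables (m k : nat) (Y : nat -> T -> 'rV[R]_m) (S : set 'rV[R]_m) (eps s q : R).
Hypotheses (mY : forall i, measurable_coords (Y i))
  (aeYS : {ae P, forall w, S (Y 0 w)}) (eps0 : 0 < eps) (s0 : 0 <= s).
Hypothesis far_le_s : forall x, S x ->
  probr P [set w | forall i : 'I_k, eps / 2 < eucl_dist (Y i w) x] <= s.
Hypothesis near_le_q : forall x, S x ->
  probr P [set w | eps / 4 < eucl_dist (Y 0 w) x] <= q.
Variable net : seq 'rV[R]_m.
Hypotheses (net_S : {in net, forall x, S x})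
  (net_cover : forall y, S y -> exists2 x, x \in net & eucl_dist x y < eps / 8).

Let N := size net.
Let x_ j := nth 0 net j.
Let A j := [set w | forall i : 'I_k, eps - eps / 8 < eucl_dist (x_ j) (Y i w)].
Let B l := [set w | eucl_dist (x_ l) (Y 0 w) < eps / 8].
Let rel (j l : 'I_N) := eucl_dist (x_ j) (x_ l) < eps / 4 + eps / 8.
Let far := [set w | has_far_point S eps (fun i : 'I_k => Y i w)].

Let x_S (j : 'I_N) : S (x_ j).
Proof. by apply: net_S; exact: mem_nth. Qed.

Let net_index y : S y -> exists2 j : 'I_N, true & eucl_dist (x_ j) y < eps / 8.
Proof.
move=> /net_cover[x xnet xy]; rewrite -index_mem in xnet.
by exists (Ordinal xnet) => //; rewrite /x_ nth_index // -index_mem.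
Qed.

Let mA j : measurable (A j).
Proof.
apply: measurable_forallT => i.
exact: measurable_eucl_dist_gt (measurable_coords_cst _) (mY i).
Qed.

Let mB l : measurable (B l).
Proof. exact: measurable_eucl_dist_lt (measurable_coords_cst _) (mY 0). Qed.

Let mfar : measurable far.
Proof. exact: measurable_has_far_point. Qed.

Let probr_far_le_sum : probr P far <= \sum_(j < N) probr P (seqDU A j).
Proof.
rewrite -probr_bigsetU; [|exact: seqDU_measurable|exact: trivIset_seqDU_ord].
apply: le_probr_ae => //; first by apply: bigsetU_measurable => j _; exact: seqDU_measurable.
apply: aeW => w [x Sx xY]; have [j _ jx] := net_index Sx.
have : (\big[setU/set0]_(l < N) A l) w.
  apply: (bigsetU_sup (ltn_ord j)) => i; have := xY i.
  by have := eucl_dist_triangle x (x_ j) (Y i w); rewrite eucl_distC in jx; lra.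
by rewrite bigsetU_seqDU.
Qed.

Let mfar_from x : measurable [set w | forall i : 'I_k, eps / 2 < eucl_dist (Y i w) x].
Proof.
apply: measurable_forallT => i.
exact: measurable_eucl_dist_gt (mY i) (measurable_coords_cst _).
Qed.

Let sum_rel_A_le (l : 'I_N) : \sum_(j < N | rel j l) probr P (seqDU A j) <= s.
Proof.
rewrite -probr_bigsetU; [|exact: seqDU_measurable|exact: trivIset_seqDU_ord].
apply: le_trans (far_le_s (x_S l)); apply: le_probr_ae => //.
  by apply: bigsetU_measurable => j _; exact: seqDU_measurable.
apply: aeW => w /bigsetU_condP[j jl jY] i; have := subset_seqDU jY i.
have := eucl_dist_triangle (x_ j) (x_ l) (Y i w); move: jl.
by rewrite /rel [eucl_dist (Y i w) _]eucl_distC; lra.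
Qed.

Let sum_C_le1 : \sum_(l < N) probr P (seqDU B l) <= 1.
Proof.
rewrite -probr_bigsetU; [|exact: seqDU_measurable|exact: trivIset_seqDU_ord].
by apply: probr_le1; apply: bigsetU_measurable => l _; exact: seqDU_measurable.
Qed.

Let sum_rel_C_ge (j : 'I_N) : 1 - q <= \sum_(l < N | rel j l) probr P (seqDU B l).
Proof.
have mQ : measurable [set w | eps / 4 < eucl_dist (Y 0 w) (x_ j)].
  exact: measurable_eucl_dist_gt (mY 0) (measurable_coords_cst _).
apply: (@le_trans _ _ (probr P (~` [set w | eps / 4 < eucl_dist (Y 0 w) (x_ j)]))).
  by rewrite probr_setC //; have := near_le_q (x_S j); lra.
rewrite -probr_bigsetU; [|exact: seqDU_measurable|exact: trivIset_seqDU_ord].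
apply: le_probr_ae; first exact: measurableC.
  by apply: bigsetU_measurable => l _; exact: seqDU_measurable.
apply: filterS aeYS => w /net_index[l0 _ l0Y] /negP; rewrite -leNgt => Yj.
have : (\big[setU/set0]_(l < N) B l) w by exact: (bigsetU_sup (ltn_ord l0)).
rewrite bigsetU_seqDU => /bigsetU_condP[l _ Cl]; apply/bigsetU_condP; exists l => //.
have := eucl_dist_triangle (x_ j) (Y 0 w) (x_ l); have := subset_seqDU Cl.
move: Yj; rewrite /B /rel /= [eucl_dist (Y 0 w) (x_ j)]eucl_distC.
by rewrite [eucl_dist (x_ l) _]eucl_distC; lra.
Qed.

Lemma probr_far_le_mul_size : probr P far <= (size net)%:R * s.
Proof.
have a_le (j : 'I_N) : probr P (seqDU A j) <= s.
  apply: le_trans (sum_rel_A_le j); rewrite (bigD1 j) /=; last first.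
    by rewrite /rel eucl_distxx; apply: addr_gt0; apply: divr_gt0.
  by rewrite lerDl; apply: sumr_ge0 => *; exact: probr_ge0.
apply: le_trans probr_far_le_sum _; apply: le_trans (ler_sum _ (fun j _ => a_le j)) _.
by rewrite sumr_const card_ord mulr_natl.
Qed.

Lemma one_sub_mul_probr_far_le : (1 - q) * probr P far <= s.
Proof.
have [q1|q1] := ltrP 1 q.
  by apply: le_trans s0; rewrite nmulr_rle0 ?probr_ge0 // subr_lt0.
apply: le_trans (ler_wpM2l _ probr_far_le_sum) _; first by rewrite subr_ge0.
exact: double_counting_le (fun _ => probr_ge0 _ _) (fun _ => probr_ge0 _ _)
  s0 sum_C_le1 sum_rel_C_ge sum_rel_A_le.
Qed.

End far_point_bound.

Lemma ereal_sup_probability d0 (T : measurableType d0) (R : realType)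
    (P : probability T R) (I : Type) (D : set I) (F : I -> set T) :
  D !=set0 -> (forall i, D i -> measurable (F i)) ->
  exists2 s : R, ereal_sup [set P (F i) | i in D] = s%:E & 0 <= s <= 1.
Proof.
move=> [i0 Di0] mF; set sE := ereal_sup _.
have sE0 : (0 <= sE)%E.
  by apply: le_trans (measure_ge0 P (F i0)) _; apply: ereal_sup_ubound; exists i0.
have sE1 : (sE <= 1)%E.
  by apply/ereal_supP => _ [i Di <-]; exact: (probability_le1 P (mF i Di)).
have sEfin : sE \is a fin_num by rewrite ge0_fin_numE // (le_lt_trans sE1) ?ltey.
by exists (fine sE); rewrite ?fineK // -!lee_fin fineK // sE0.
Qed.

Lemma prob_far_point_le d0 (T : measurableType d0) (R : realType)
    (P : probability T R) m k (Y : nat -> T -> 'rV[R]_m) (S : set 'rV[R]_m) (eps : R) :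
  (forall i, measurable_coords (Y i)) -> compact S -> is_support P (Y 0) S -> 0 < eps ->
  (P [set w | has_far_point S eps (fun i : 'I_k => Y i w)]
     <= ereal_sup [set P [set w | (\big[mine/+oo%E]_(i < k)
                                     (eucl_dist (Y i w) x)%:E
                                   > (eps / 2)%:E)%E] | x in S]
        / (1 - ereal_sup [set P [set w | ((eucl_dist (Y 0 w) x)%:E
                                          > (eps / 4)%:E)%E] | x in S]))%E.
Proof.
move=> mY cptS HS eps0; have S0 := is_support_neq0 HS; case: HS => cS PS _.
have aeYS : {ae P, forall w, S (Y 0 w)}.
  by apply/ae_probability1 => //; exact: measurable_closed_mem.
pose far_from x := [set w | forall i : 'I_k, eps / 2 < eucl_dist (Y i w) x].
pose near_not x := [set w | eps / 4 < eucl_dist (Y 0 w) x].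
have mfar_from x : measurable (far_from x).
  apply: measurable_forallT => i.
  exact: measurable_eucl_dist_gt (mY i) (measurable_coords_cst _).
have mnear_not x : measurable (near_not x).
  exact: measurable_eucl_dist_gt (mY 0) (measurable_coords_cst _).
have -> : [set P [set w | (\big[mine/+oo%E]_(i < k) (eucl_dist (Y i w) x)%:E
    > (eps / 2)%:E)%E] | x in S] = [set P (far_from x) | x in S].
  congr image; apply/funext => x; f_equal; apply/seteqP; split=> w /=.
    by move=> /bigmin_gtP[_ Yx] i; rewrite -lte_fin Yx.
  by move=> Yx; apply/bigmin_gtP; split=> [|i _]; rewrite ?ltey // lte_fin.
have -> : [set P [set w | ((eucl_dist (Y 0 w) x)%:E > (eps / 4)%:E)%E] | x in S] =
    [set P (near_not x) | x in S].
  by congr image; apply/funext => x; f_equal; apply/seteqP; split=> w; rewrite /= lte_fin.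
have [s sE /andP[s0 _]] := ereal_sup_probability P S0 (fun x _ => mfar_from x).
have [q qE /andP[_ q1]] := ereal_sup_probability P S0 (fun x _ => mnear_not x).
have far_le_s x : S x -> probr P (far_from x) <= s.
  by move=> Sx; rewrite -lee_fin -probrE // -sE; apply: ereal_sup_ubound; exists x.
have near_le_q x : S x -> probr P (near_not x) <= q.
  by move=> Sx; rewrite -lee_fin -probrE // -qE; apply: ereal_sup_ubound; exists x.
have [net net_S net_cover] := compact_eucl_net cptS (divr_gt0 eps0 (ltr0Sn R 7)).
have mfar : measurable [set w | has_far_point S eps (fun i : 'I_k => Y i w)].
  exact: measurable_has_far_point.
have far_q := one_sub_mul_probr_far_le mY aeYS s0 far_le_s near_le_q net_S net_cover.
have far_size := probr_far_le_mul_size mY eps0 far_le_s net_S net_cover.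
rewrite sE qE probrE // -EFinB; have [q_lt1|q_ge1] := ltrP q 1.
  rewrite inver gt_eqF ?subr_gt0 // -EFinM lee_fin ler_pdivlMr ?subr_gt0 //.
  by rewrite mulrC.
have -> : q = 1 by apply/eqP; rewrite eq_le q1.
(* The bound is now s / 0, which is +oo for s > 0 and 0 * +oo = 0 for s = 0. *)
rewrite subrr inver eqxx; have [s_gt0|s_le0] := ltrP 0 s.
  by rewrite gt0_muley ?lte_fin // leey.
have s_eq0 : s = 0 by apply/eqP; rewrite eq_le s_le0.
by rewrite s_eq0 mul0e lee_fin; rewrite s_eq0 mulr0 in far_size.
Qed.

Section hausdorff_blocks.
Context d0 (T : measurableType d0) (R : realType) (P : probability T R).
Variables (d : nat) (X : nat -> T -> 'rV[R]_d).
Hypotheses (HX : forall t, random_vector (X t)) (Hstat : stationary P X).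

Lemma prob_hausdorff_le_blocks (M : set 'rV[R]_d) n k r (eps : R)
    (Mdr : set 'rV[R]_(r * d)) :
  is_support P (X 0) M -> is_support P (block X r 0) Mdr ->
  0 < eps -> (0 < r)%N -> (k * r <= n)%N ->
  (P [set w | (eps%:E < hausdorff (range (fun t : 'I_n => X t w)) M)%E]
   <= P [set w | (eps%:E < hausdorff (range (fun i : 'I_k => block X r i w)) Mdr)%E])%E.
Proof.
move=> HM HMdr eps0 r0 krn; pose j0 : 'I_r := Ordinal r0.
have mX t : measurable_coords (X t) by exact: random_vector_coords.
have mY i : measurable_coords (block X r i) by exact: measurable_coords_block.
apply: le_measure_ae; [exact: measurable_hausdorff_gt|exact: measurable_hausdorff_gt|].
have : {ae P, forall w, forall t : 'I_n, M (X t w)}.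
  by apply: filter_forall => t; exact: (ae_in_support_X HX Hstat).
apply: filterS => w XM.
move=> /(hausdorff_gt_in (v := fun t : 'I_n => X t w) (ltW eps0) XM)[x Mx].
move=> /finite_gap[g g0 xX].
have M_Mdr := support_sub_closure_row HX Hstat j0 HM HMdr.
have [_ [y Mdr_y <-] xy] := closure_eucl_approx (M_Mdr x Mx) g0.
apply/hausdorff_gtP; right; exists y => // i.
have iX : (i * r + j0 < n)%N by rewrite addn0 (leq_trans _ krn) // ltn_pmul2r.
have := xX (Ordinal iX); have := enorm_row_vec_mx_le (y - block X r i w) j0.
rewrite !linearB /= row_vec_mx_block.
have := eucl_dist_triangle x (row j0 (vec_mx y)) (X (i * r + j0)%N w).
by move: xy; rewrite /eucl_dist /= addn0; lra.
Qed.

End hausdorff_blocks.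

Theorem proposition3p1 (R : realType) (d0 : measure_display)
  (T : measurableType d0) (P : probability T R) (d : nat)
  (X : nat -> T -> 'rV[R]_d)
  (HX : forall t, random_vector (X t))
  (Hstat : stationary P X)
  (M : set 'rV[R]_d) (HMc : compact M) (HM : is_support P (X 0%N) M)
  (n k r : nat) (eps : R) (Hn : (1 <= n)%N) (Heps : 0 < eps)
  (Hk : (0 < k)%N) (Hr : (0 < r)%N) (Hkr : (k * r <= n)%N)
  (Mdr : set 'rV[R]_(r * d)) (HMdr : is_support P (block X r 0) Mdr) :
  let Xn := fun w => [set X (t : 'I_n) w | t in [set: 'I_n]] in
  let Yk := fun w => [set block X r (i : 'I_k) w | i in [set: 'I_k]] in
  (P [set w | (hausdorff (Xn w) M > eps%:E)%E]
     <= P [set w | (hausdorff (Yk w) Mdr > eps%:E)%E])%E /\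
  (P [set w | (hausdorff (Yk w) Mdr > eps%:E)%E]
     <= ereal_sup [set P [set w | (\big[mine/+oo%E]_(i < k)
                                     (eucl_dist (block X r i w) x)%:E
                                   > (eps / 2)%:E)%E] | x in Mdr]
        / (1 - ereal_sup [set P [set w | ((eucl_dist (block X r 0 w) x)%:E
                                          > (eps / 4)%:E)%E] | x in Mdr]))%E.
Proof.
move=> Xn Yk; split; first exact: prob_hausdorff_le_blocks.
have mY i : measurable_coords (block X r i) by exact: measurable_coords_block.
have cptMdr := support_block_compact HX Hstat HMc HM HMdr.
apply: le_trans _ (prob_far_point_le k mY cptMdr HMdr Heps).
apply: le_measure_ae; [exact: measurable_hausdorff_gt|exact: measurable_has_far_point|].
have : {ae P, forall w, forall i : 'I_k, Mdr (block X r i w)}.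
  by apply: filter_forall => i; exact: (ae_in_support_block HX Hstat).
by apply: filterS => w YMdr /(hausdorff_gt_in (ltW Heps) YMdr).
Qed.
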